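(* For each $2p\in\{76, 92, 96, 108, 116, 124, 128, 144, 148, 164, 172, 188, 192, 212, 236, 244, 256, 268, 284, 288, 292, 316, 332, 348, 356\}$ there exists a set of three mutually nearly orthogonal Latin squares of order $2p$.
   Context: A Latin square of order $n$ is an $n\times n$ array with entries in $\mathbb{Z}_n$ in which each symbol occurs exactly once in every row and every column. For two Latin squares $A=[a(i,j)]$, $B=[b(i,j)]$ of order $n$ let $O$ be the multiset $\{(a(i,j),b(i,j)) : 0\le i,j\le n-1\}$. $A$ and $B$ are pseudo-orthogonal if for every $a\in\mathbb{Z}_n$ the number of distinct ordered pairs in $O$ with first coordinate $a$ is exactly $n-1$. They are nearly orthogonal if they are pseudo-orthogonal and $O$ contains no pair of the form $(a,a)$. A set of Latin squares is mutually nearly orthogonal if its members are pairwise nearly orthogonal. *)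

From mathcomp Require Import all_boot.
Set Implicit Arguments. Unset Strict Implicit. Unset Printing Implicit Defensive.

Definition square (n : nat) := 'I_n -> 'I_n -> 'I_n.

Definition latin_square (n : nat) (A : square n) : Prop :=
  (forall (i s : 'I_n), #|[set j : 'I_n | A i j == s]| = 1) /\
  (forall (j s : 'I_n), #|[set i : 'I_n | A i j == s]| = 1).

(* number of distinct ordered pairs (a, b) in the multiset O with first coordinate a *)
Definition second_coords (n : nat) (A B : square n) (a : 'I_n) : {set 'I_n} :=
  [set b : 'I_n | [exists i : 'I_n, exists j : 'I_n, (A i j == a) && (B i j == b)]].

Definition pseudo_orthogonal (n : nat) (A B : square n) : Prop :=
  forall a : 'I_n, #|second_coords A B a| = n - 1.

Definition nearly_orthogonal (n : nat) (A B : square n) : Prop :=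
  pseudo_orthogonal A B /\ (forall i j : 'I_n, A i j != B i j).

From HB Require Import structures.
From mathcomp Require Import all_boot all_algebra.
Import GRing.Theory.
Set Implicit Arguments. Unset Strict Implicit. Unset Printing Implicit Defensive.

(* Over an abelian group G of order n, a row rho : 'I_n -> G develops into the
   square L_rho(g, j) = rho j + g, which is Latin as soon as rho is injective.
   The symbols paired with rho j + g in L_rho and L_sigma are sigma j + g, so the
   second coordinates over a fixed symbol a are the translates by a of the
   differences sigma j - rho j.  Hence L_rho and L_sigma are nearly orthogonal
   iff sigma - rho never vanishes and takes exactly n - 1 values.  For each order
   we exhibit three rows with this property pairwise, found by computer search
   and verified by evaluation; the group is Z_n, except for n = 108 where it is
   Z_4 x Z_3^3. *)

Definition three_MNOLS (n : nat) : Prop :=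
  exists A B C : square n,
    (latin_square A /\ latin_square B /\ latin_square C) /\
    (nearly_orthogonal A B /\ nearly_orthogonal A C /\ nearly_orthogonal B C).

Lemma card_fiber_inj (T : finType) (f : T -> T) (x : T) :
  injective f -> #|[set y | f y == x]| = 1.
Proof.
move=> f_inj; rewrite -(cards1 x) -(card_preimset [set x] f_inj).
by apply: eq_card => y; rewrite !inE.
Qed.

Lemma card_set_seq (T : finType) (s : seq T) : #|[set x in s]| = size (undup s).
Proof.
by rewrite cardsE -(eq_card (mem_undup s)); apply/card_uniqP/undup_uniq.
Qed.

Lemma imset_ord_iota (T : finType) n (F : nat -> T) :
  [set F j | j : 'I_n] = [set x in [seq F j | j <- iota 0 n]].
Proof.
apply/setP => x; rewrite inE -val_enum_ord -map_comp.
by apply/imsetP/mapP => -[j _ ->]; exists j; rewrite ?mem_enum.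
Qed.

Lemma nth_ord_inj (T : eqType) (x0 : T) (s : seq T) n :
  uniq s -> n <= size s -> injective (fun j : 'I_n => nth x0 s j).
Proof.
move=> s_uniq n_le i j /eqP.
by rewrite nth_uniq ?(leq_trans (ltn_ord _) n_le) // => /eqP/val_inj.
Qed.

Local Open Scope ring_scope.

Section Development.

Variable G : finZmodType.
Implicit Types rho sigma : 'I_#|G| -> G.

Definition develop rho : square #|G| := fun i j => enum_rank (rho j + enum_val i).

Lemma develop_latin rho : injective rho -> latin_square (develop rho).
Proof.
move=> rho_inj; split=> [i a | j a]; apply: card_fiber_inj.
  by move=> j k /enum_rank_inj /addIr /rho_inj.
by move=> i k /enum_rank_inj /addrI /enum_val_inj.
Qed.

Lemma second_coords_develop rho sigma a :
  second_coords (develop rho) (develop sigma) a =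
    [set enum_rank (d + enum_val a) | d in [set sigma j - rho j | j : 'I_#|G|]].
Proof.
apply/setP => b; rewrite inE; apply/existsP/imsetP.
  case=> i /existsP [j /andP [/eqP rho_a /eqP sigma_b]].
  exists (sigma j - rho j); first exact: imset_f.
  by rewrite -sigma_b -rho_a enum_rankK addrA subrK.
case=> _ /imsetP [j _ ->] ->.
exists (enum_rank (enum_val a - rho j)); apply/existsP; exists j.
by rewrite /develop enum_rankK [rho j + _]addrCA subrr addr0 enum_valK addrA addrAC !eqxx.
Qed.

Lemma card_second_coords_develop rho sigma a :
  #|second_coords (develop rho) (develop sigma) a| =
    #|[set sigma j - rho j | j : 'I_#|G|]|.
Proof.
by rewrite second_coords_develop card_imset // => d e /enum_rank_inj /addIr.
Qed.

Lemma develop_nearly_orthogonal rho sigma :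
  (forall j, sigma j != rho j) ->
  #|[set sigma j - rho j | j : 'I_#|G|]| = (#|G| - 1)%N ->
  nearly_orthogonal (develop rho) (develop sigma).
Proof.
move=> sigma_neq_rho card_diffs; split=> [a | i j].
  by rewrite card_second_coords_develop.
by apply: contra_neq (sigma_neq_rho j) => /enum_rank_inj /addIr.
Qed.

End Development.

Section Certificates.

Variables (G : zmodType) (n : nat).
Implicit Types r s t : seq G.

Definition row_diffs r s : seq G := [seq nth 0 s j - nth 0 r j | j <- iota 0 n].

Definition near_rows r s : bool :=
  (0 \notin row_diffs r s) && (size (undup (row_diffs r s)) == (n - 1)%N).

Definition mnols_certificate r s t : bool :=
  [&& all (fun u => uniq u && (size u == n)) [:: r; s; t],
      near_rows r s, near_rows r t & near_rows s t].

End Certificates.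

Lemma near_rows_develop (G : finZmodType) (r s : seq G) :
  near_rows #|G| r s ->
  nearly_orthogonal (develop (fun j => nth 0 r j)) (develop (fun j => nth 0 s j)).
Proof.
case/andP=> zero_notin /eqP card_diffs; apply: develop_nearly_orthogonal.
  move=> j; apply: contraNneq zero_notin => eq_rs; apply/mapP.
  by exists (val j); rewrite ?mem_iota ?ltn_ord ?eq_rs ?subrr.
by rewrite (@imset_ord_iota _ _ (fun j => nth 0 s j - nth 0 r j)) card_set_seq.
Qed.

Lemma three_MNOLS_of_certificate (G : finZmodType) n (r s t : seq G) :
  #|G| = n -> mnols_certificate n r s t -> three_MNOLS n.
Proof.
move=> <- /and4P [/and4P [/andP [r_uniq /eqP r_size] /andP [s_uniq /eqP s_size]
  /andP [t_uniq /eqP t_size] _] near_rs near_rt near_st].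
have row_inj u : uniq u -> size u = #|G| -> injective (fun j : 'I_#|G| => nth 0 u j).
  by move=> u_uniq u_size; apply: nth_ord_inj; rewrite ?u_size.
exists (develop (fun j => nth 0 r j)), (develop (fun j => nth 0 s j)),
  (develop (fun j => nth 0 t j)).
split; first by split; [|split]; apply/develop_latin/row_inj.
by split; [|split]; apply: near_rows_develop.
Qed.

Local Close Scope ring_scope.

Definition Zp_certificate (cert : nat * seq nat * seq nat) : bool :=
  let: (n, s, t) := cert in
  (1 < n) &&
  mnols_certificate n [seq inZp k : 'Z_n | k <- iota 0 n] (map inZp s) (map inZp t).

Lemma three_MNOLS_of_Zp_certificate cert :
  Zp_certificate cert -> three_MNOLS cert.1.1.
Proof.
case: cert => [[n s] t] /andP [n_gt1 cert].
by apply: three_MNOLS_of_certificate cert; rewrite card_ord Zp_cast.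
Qed.

Local Close Scope ring_scope.

(* A certificate (n, s, t) lists the second and third rows of a cyclic
   solution as residues mod n; the first row is 0, 1, ..., n - 1. *)
Definition Zp_certificates : seq (nat * seq nat * seq nat) := [::
  (76,
   [:: 52; 5; 27; 8; 68; 32; 72; 16; 51; 40; 22; 6; 35; 70; 33; 13; 54; 55; 2; 41; 23; 69; 9; 44;
       37; 19; 50; 0; 58; 4; 62; 39; 10; 12; 26; 46; 56; 1; 21; 30; 25; 43; 59; 3; 14; 73; 75; 63;
       7; 38; 64; 66; 49; 11; 61; 20; 57; 18; 15; 45; 28; 67; 31; 34; 74; 47; 29; 60; 42; 65; 36;
       48; 71; 53; 24; 17],
   [:: 3; 69; 75; 9; 70; 64; 29; 38; 36; 2; 5; 66; 17; 34; 62; 51; 74; 58; 16; 56; 59; 10; 0; 25;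
       50; 40; 27; 65; 68; 53; 37; 47; 54; 67; 30; 1; 49; 24; 8; 20; 72; 35; 71; 42; 48; 4; 55; 61;
       32; 57; 12; 63; 19; 22; 28; 26; 33; 14; 31; 44; 46; 41; 73; 39; 52; 6; 15; 21; 11; 60; 45;
       13; 23; 7; 18; 43]);
  (92,
   [:: 70; 56; 59; 61; 82; 36; 81; 17; 10; 78; 77; 30; 89; 46; 50; 55; 25; 47; 84; 22; 27; 43; 67;
       7; 23; 16; 79; 88; 42; 18; 57; 85; 11; 14; 80; 58; 86; 33; 49; 9; 35; 0; 74; 44; 87; 73; 1;
       40; 45; 62; 66; 39; 2; 91; 71; 28; 54; 63; 29; 51; 3; 69; 26; 75; 6; 12; 90; 24; 48; 41; 4;
       76; 21; 60; 68; 65; 5; 31; 38; 83; 13; 37; 34; 20; 52; 8; 53; 32; 64; 15; 72; 19],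
   [:: 23; 58; 72; 8; 34; 84; 53; 13; 83; 29; 44; 36; 28; 65; 12; 64; 42; 80; 66; 87; 1; 71; 10; 90;
       15; 39; 43; 54; 52; 67; 45; 74; 78; 69; 63; 19; 91; 49; 27; 61; 6; 26; 32; 56; 88; 76; 47;
       24; 30; 86; 14; 25; 59; 7; 21; 35; 3; 60; 51; 20; 33; 4; 41; 55; 17; 37; 2; 62; 77; 9; 38;
       75; 68; 0; 22; 85; 73; 18; 89; 81; 50; 31; 11; 82; 70; 79; 48; 46; 57; 5; 16; 40]);
  (96,
   [:: 1; 81; 27; 17; 31; 11; 89; 69; 93; 87; 58; 22; 67; 39; 55; 62; 68; 77; 38; 26; 76; 82; 40;
       74; 53; 94; 50; 43; 72; 32; 24; 65; 3; 46; 71; 34; 19; 85; 60; 13; 45; 49; 91; 75; 83; 6; 44;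
       10; 36; 66; 29; 79; 54; 21; 92; 2; 33; 90; 20; 35; 51; 18; 8; 12; 61; 37; 56; 25; 48; 47; 63;
       5; 95; 59; 28; 42; 16; 52; 88; 14; 84; 73; 7; 78; 23; 4; 30; 0; 57; 70; 86; 41; 15; 9; 64;
       80],
   [:: 52; 45; 12; 35; 77; 91; 30; 29; 38; 78; 61; 16; 50; 68; 72; 27; 76; 24; 51; 90; 62; 83; 67;
       89; 11; 10; 94; 25; 6; 37; 69; 2; 73; 19; 59; 26; 93; 17; 66; 75; 22; 87; 5; 36; 58; 42; 15;
       60; 85; 80; 71; 86; 47; 32; 21; 49; 55; 53; 92; 74; 41; 70; 63; 31; 82; 57; 54; 14; 20; 34;
       44; 28; 3; 56; 7; 95; 79; 4; 84; 23; 64; 1; 33; 13; 88; 39; 46; 40; 9; 65; 48; 43; 81; 8; 0;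
       18]);
  (116,
   [:: 84; 103; 41; 66; 62; 87; 96; 92; 1; 13; 67; 63; 43; 26; 109; 80; 14; 97; 47; 107; 27; 72; 3;
       79; 82; 20; 61; 28; 95; 100; 58; 4; 9; 75; 42; 5; 81; 99; 59; 77; 76; 68; 86; 93; 64; 69; 29;
       31; 102; 38; 56; 16; 15; 11; 70; 74; 48; 37; 91; 2; 78; 51; 40; 0; 18; 36; 54; 101; 90; 8;
       55; 73; 33; 60; 111; 71; 6; 89; 83; 23; 32; 57; 39; 115; 17; 35; 53; 49; 44; 112; 50; 85; 45;
       25; 21; 104; 113; 22; 108; 30; 10; 46; 105; 114; 52; 19; 65; 98; 7; 106; 34; 110; 94; 88; 12;
       24],
   [:: 27; 36; 16; 112; 63; 101; 85; 65; 103; 50; 1; 39; 23; 86; 8; 38; 113; 64; 6; 95; 62; 3; 60;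
       88; 44; 24; 29; 67; 115; 82; 98; 83; 21; 96; 47; 105; 75; 45; 102; 14; 72; 15; 43; 41; 70;
       66; 94; 9; 57; 7; 35; 34; 2; 69; 31; 91; 0; 22; 89; 110; 109; 53; 81; 80; 108; 49; 19; 18;
       46; 42; 99; 11; 10; 79; 40; 97; 73; 111; 33; 13; 84; 93; 87; 28; 114; 26; 76; 56; 55; 107;
       58; 78; 48; 52; 90; 12; 25; 92; 74; 106; 61; 71; 104; 30; 68; 77; 5; 37; 17; 51; 4; 32; 20;
       59; 100; 54]);
  (124,
   [:: 61; 77; 18; 99; 117; 107; 44; 121; 36; 12; 60; 97; 58; 81; 73; 106; 29; 112; 103; 56; 90; 31;
       102; 55; 22; 39; 46; 23; 83; 100; 9; 74; 95; 67; 52; 122; 13; 110; 82; 113; 8; 11; 1; 50;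
       104; 10; 26; 80; 32; 4; 33; 25; 75; 109; 94; 47; 105; 59; 0; 65; 86; 69; 53; 84; 68; 101;
       114; 21; 92; 2; 28; 57; 66; 14; 79; 51; 85; 88; 119; 72; 115; 38; 48; 71; 96; 19; 24; 118;
       70; 49; 54; 6; 30; 123; 45; 76; 91; 42; 27; 98; 5; 116; 20; 43; 89; 35; 7; 34; 3; 78; 111;
       64; 87; 41; 17; 63; 37; 40; 16; 62; 93; 108; 15; 120],
   [:: 56; 123; 121; 117; 86; 46; 49; 62; 47; 120; 98; 8; 99; 4; 64; 57; 0; 22; 118; 100; 16; 107;
       48; 92; 77; 88; 66; 84; 93; 18; 96; 63; 54; 52; 26; 115; 97; 44; 11; 60; 14; 43; 3; 114; 19;
       90; 95; 13; 122; 58; 85; 21; 83; 112; 108; 59; 37; 42; 9; 7; 29; 94; 45; 28; 72; 81; 6; 113;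
       82; 80; 76; 38; 87; 103; 101; 68; 35; 15; 91; 73; 51; 25; 36; 65; 12; 110; 106; 75; 40; 2;
       67; 5; 109; 61; 74; 119; 39; 17; 53; 33; 78; 102; 105; 41; 116; 32; 30; 79; 31; 55; 89; 71;
       111; 23; 50; 1; 10; 70; 104; 24; 69; 20; 34; 27]);
  (128,
   [:: 1; 38; 123; 90; 64; 118; 54; 41; 82; 101; 126; 100; 9; 17; 71; 28; 30; 53; 94; 74; 120; 29;
       16; 86; 49; 89; 69; 55; 12; 93; 36; 42; 8; 112; 14; 61; 88; 87; 116; 25; 115; 48; 7; 113; 34;
       114; 70; 67; 119; 19; 122; 47; 21; 109; 20; 106; 98; 62; 97; 75; 39; 78; 103; 37; 73; 52; 22;
       77; 60; 102; 65; 4; 95; 127; 92; 66; 15; 35; 99; 50; 111; 44; 85; 32; 5; 10; 3; 18; 33; 72;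
       63; 59; 104; 125; 121; 13; 26; 57; 117; 11; 2; 58; 56; 40; 81; 45; 84; 105; 46; 124; 91; 110;
       6; 68; 24; 31; 83; 51; 80; 108; 27; 96; 23; 76; 43; 107; 0; 79],
   [:: 30; 94; 66; 86; 46; 9; 35; 124; 34; 122; 41; 19; 104; 95; 111; 88; 54; 92; 112; 69; 125; 22;
       77; 76; 60; 83; 105; 29; 91; 78; 0; 49; 43; 73; 79; 21; 58; 16; 65; 17; 28; 121; 37; 39; 67;
       48; 116; 109; 85; 103; 11; 110; 25; 36; 51; 5; 123; 10; 6; 40; 107; 126; 72; 20; 99; 23; 127;
       61; 75; 18; 52; 3; 115; 106; 50; 119; 82; 57; 87; 7; 47; 24; 74; 96; 2; 113; 84; 27; 1; 80;
       114; 32; 117; 55; 93; 15; 108; 102; 118; 45; 71; 64; 70; 63; 97; 120; 62; 81; 44; 68; 33;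
       101; 56; 100; 98; 90; 4; 89; 42; 8; 13; 59; 26; 14; 53; 31; 12; 38]);
  (144,
   [:: 1; 28; 131; 97; 9; 100; 56; 79; 135; 110; 46; 21; 119; 45; 60; 19; 2; 142; 122; 99; 78; 23;
       89; 65; 59; 14; 51; 108; 92; 104; 114; 18; 137; 121; 50; 109; 55; 93; 22; 29; 71; 35; 49;
       112; 70; 17; 105; 130; 43; 26; 64; 5; 95; 52; 0; 66; 54; 72; 32; 141; 27; 132; 7; 136; 117;
       34; 113; 88; 16; 11; 94; 62; 133; 76; 139; 98; 127; 118; 123; 87; 39; 77; 91; 48; 106; 58;
       134; 57; 41; 36; 8; 129; 80; 111; 13; 38; 12; 30; 53; 4; 68; 83; 24; 82; 96; 138; 126; 3;
       125; 115; 90; 124; 44; 6; 143; 86; 74; 73; 84; 47; 10; 31; 33; 120; 37; 103; 75; 61; 140; 15;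
       25; 107; 40; 85; 69; 128; 20; 63; 102; 101; 81; 116; 42; 67],
   [:: 77; 32; 60; 123; 72; 107; 22; 137; 12; 143; 126; 14; 87; 39; 132; 141; 88; 46; 71; 62; 61;
       115; 120; 74; 56; 128; 54; 83; 108; 100; 93; 114; 80; 129; 125; 50; 47; 57; 112; 24; 73; 65;
       37; 36; 5; 82; 43; 86; 134; 130; 102; 40; 8; 118; 41; 64; 31; 139; 76; 81; 96; 42; 68; 11;
       33; 48; 142; 122; 117; 34; 105; 51; 1; 75; 0; 9; 55; 20; 138; 49; 21; 27; 45; 38; 2; 110; 26;
       15; 59; 133; 136; 44; 119; 91; 101; 109; 90; 17; 106; 66; 113; 16; 98; 104; 70; 97; 63; 13;
       30; 121; 127; 79; 29; 7; 124; 25; 94; 18; 4; 103; 23; 140; 84; 19; 69; 89; 99; 78; 116; 6;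
       53; 10; 67; 58; 111; 95; 135; 35; 28; 52; 131; 85; 3; 92]);
  (148,
   [:: 55; 102; 118; 11; 132; 142; 76; 134; 75; 22; 37; 128; 64; 0; 112; 19; 74; 88; 110; 34; 69;
       127; 31; 89; 36; 122; 106; 3; 68; 123; 59; 85; 26; 121; 99; 6; 135; 29; 2; 115; 62; 32; 79;
       4; 94; 98; 56; 77; 139; 1; 91; 47; 90; 41; 129; 61; 54; 81; 13; 16; 86; 107; 46; 66; 50; 124;
       83; 144; 119; 103; 7; 25; 35; 101; 8; 137; 12; 133; 117; 24; 52; 125; 72; 45; 44; 92; 147;
       57; 21; 105; 104; 126; 87; 14; 33; 43; 27; 63; 141; 131; 67; 84; 113; 23; 30; 80; 53; 100;
       73; 9; 130; 116; 97; 38; 96; 114; 58; 5; 136; 78; 145; 18; 95; 39; 48; 146; 20; 108; 40; 70;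
       60; 109; 17; 71; 111; 10; 51; 93; 140; 65; 49; 138; 143; 42; 15; 28; 120; 82],
   [:: 120; 78; 87; 31; 137; 95; 46; 12; 90; 19; 97; 65; 60; 92; 18; 114; 62; 42; 143; 69; 58; 24;
       139; 68; 37; 131; 134; 103; 141; 15; 81; 133; 100; 29; 33; 55; 77; 16; 85; 106; 109; 144;
       102; 127; 105; 43; 75; 4; 35; 104; 52; 13; 96; 84; 10; 0; 128; 138; 117; 121; 124; 53; 32;
       116; 45; 98; 108; 51; 41; 7; 122; 61; 93; 21; 80; 28; 6; 17; 94; 5; 23; 48; 50; 8; 107; 82;
       30; 70; 20; 126; 40; 140; 67; 110; 57; 89; 91; 79; 72; 113; 71; 27; 54; 130; 111; 83; 115;
       73; 142; 26; 132; 99; 47; 36; 1; 76; 135; 64; 129; 145; 38; 3; 63; 11; 136; 74; 119; 118;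
       146; 88; 25; 39; 59; 9; 123; 44; 112; 101; 22; 49; 86; 56; 2; 34; 66; 125; 147; 14]);
  (164,
   [:: 31; 33; 90; 111; 74; 153; 41; 14; 89; 155; 53; 161; 13; 99; 55; 0; 24; 59; 81; 96; 131; 103;
       15; 39; 142; 128; 143; 1; 159; 42; 22; 26; 47; 85; 98; 40; 146; 129; 67; 88; 109; 61; 3; 139;
       163; 91; 136; 75; 65; 11; 97; 118; 150; 62; 34; 110; 158; 76; 130; 154; 25; 38; 21; 141; 63;
       145; 122; 126; 82; 4; 107; 73; 2; 64; 156; 48; 151; 135; 36; 50; 43; 92; 132; 52; 27; 10;
       116; 6; 133; 95; 117; 20; 44; 115; 51; 157; 140; 100; 138; 19; 124; 37; 123; 79; 83; 69; 93;
       105; 29; 147; 144; 8; 84; 149; 80; 104; 106; 127; 66; 70; 60; 54; 78; 7; 28; 32; 94; 23; 17;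
       30; 72; 119; 113; 137; 57; 160; 45; 120; 134; 162; 77; 16; 102; 58; 114; 86; 121; 125; 35;
       18; 12; 148; 101; 46; 56; 9; 68; 5; 152; 49; 87; 71; 112; 108],
   [:: 133; 160; 113; 71; 47; 151; 162; 44; 61; 147; 105; 12; 103; 79; 101; 109; 38; 119; 115; 112;
       70; 11; 51; 10; 132; 84; 130; 36; 158; 127; 85; 143; 142; 82; 60; 153; 0; 52; 118; 35; 75;
       55; 148; 48; 100; 152; 5; 4; 9; 107; 124; 123; 65; 23; 102; 86; 18; 108; 8; 19; 141; 41; 30;
       134; 110; 155; 90; 66; 88; 146; 145; 69; 43; 83; 131; 140; 57; 53; 64; 54; 45; 93; 67; 91;
       77; 129; 58; 81; 27; 62; 2; 125; 13; 104; 117; 46; 16; 159; 17; 116; 89; 137; 154; 135; 29;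
       33; 3; 149; 136; 106; 128; 99; 139; 68; 50; 20; 163; 39; 120; 96; 34; 74; 126; 156; 73; 49;
       7; 111; 28; 92; 26; 114; 31; 42; 40; 80; 157; 78; 56; 76; 98; 97; 32; 95; 122; 63; 21; 150;
       14; 25; 24; 6; 87; 144; 121; 161; 59; 72; 1; 138; 37; 22; 94; 15]);
  (172,
   [:: 88; 98; 112; 26; 85; 2; 99; 158; 9; 157; 102; 47; 4; 169; 66; 23; 70; 129; 53; 57; 67; 163;
       87; 11; 113; 51; 127; 125; 24; 120; 46; 77; 22; 84; 41; 94; 55; 5; 165; 153; 43; 0; 62; 7;
       167; 38; 32; 79; 119; 162; 152; 33; 126; 10; 59; 122; 3; 97; 128; 76; 37; 90; 92; 73; 68; 13;
       130; 21; 80; 168; 156; 147; 71; 34; 151; 150; 139; 29; 72; 134; 36; 124; 42; 144; 105; 164;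
       19; 50; 16; 69; 14; 132; 64; 107; 39; 86; 145; 155; 30; 35; 142; 140; 171; 159; 135; 123;
       166; 56; 136; 118; 20; 117; 8; 137; 27; 15; 81; 91; 101; 25; 170; 146; 103; 108; 161; 48; 95;
       154; 115; 82; 6; 65; 143; 131; 52; 148; 138; 83; 49; 114; 106; 78; 109; 93; 17; 116; 18; 61;
       63; 111; 40; 1; 60; 75; 149; 133; 100; 58; 89; 44; 54; 96; 74; 121; 45; 104; 28; 110; 141;
       12; 31; 160],
   [:: 58; 122; 19; 170; 56; 86; 147; 162; 26; 94; 31; 97; 161; 165; 78; 158; 99; 157; 92; 33; 11;
       32; 6; 117; 132; 118; 137; 76; 87; 22; 102; 39; 62; 130; 151; 105; 89; 91; 28; 51; 119; 140;
       36; 145; 82; 60; 121; 148; 88; 109; 168; 146; 49; 16; 95; 9; 159; 80; 17; 7; 34; 12; 150; 5;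
       153; 133; 70; 52; 67; 98; 35; 136; 114; 61; 84; 171; 42; 110; 45; 113; 50; 125; 23; 38; 65;
       37; 143; 123; 149; 126; 63; 169; 154; 3; 54; 81; 53; 160; 101; 55; 8; 15; 124; 104; 129; 66;
       1; 155; 90; 29; 138; 116; 139; 115; 13; 79; 135; 156; 134; 69; 127; 4; 111; 24; 2; 103; 44;
       59; 43; 64; 128; 57; 85; 108; 77; 141; 48; 71; 75; 72; 166; 120; 100; 14; 164; 83; 20; 41;
       27; 46; 112; 10; 25; 93; 73; 131; 152; 144; 167; 0; 107; 21; 106; 47; 68; 40; 18; 30; 96; 74;
       142; 163]);
  (188,
   [:: 55; 178; 113; 10; 182; 117; 141; 40; 52; 96; 18; 105; 74; 102; 179; 64; 107; 42; 19; 0; 35;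
       147; 46; 122; 104; 156; 57; 165; 79; 97; 26; 54; 7; 130; 148; 47; 6; 152; 109; 43; 24; 163;
       127; 61; 167; 164; 120; 160; 13; 29; 22; 132; 12; 5; 81; 157; 84; 121; 9; 180; 114; 143; 172;
       2; 73; 101; 82; 28; 111; 37; 158; 175; 86; 68; 36; 115; 139; 14; 119; 23; 16; 159; 60; 135;
       94; 3; 116; 106; 87; 4; 138; 77; 185; 131; 126; 1; 88; 153; 144; 66; 41; 70; 21; 45; 110; 92;
       27; 20; 142; 67; 186; 85; 154; 89; 63; 150; 166; 65; 187; 75; 149; 50; 17; 80; 32; 108; 129;
       98; 91; 25; 112; 128; 123; 11; 181; 146; 15; 174; 183; 8; 145; 161; 95; 30; 48; 171; 78; 59;
       169; 103; 34; 124; 140; 38; 56; 177; 76; 151; 31; 118; 100; 71; 44; 176; 53; 93; 168; 184;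
       39; 99; 155; 137; 136; 90; 72; 173; 83; 170; 69; 134; 125; 51; 33; 162; 49; 62; 58; 133],
   [:: 78; 12; 134; 153; 121; 149; 69; 131; 20; 28; 4; 113; 38; 155; 94; 99; 175; 109; 11; 124; 5;
       8; 61; 183; 70; 101; 54; 92; 135; 91; 145; 164; 59; 181; 43; 49; 118; 105; 15; 128; 53; 98;
       185; 157; 66; 148; 3; 103; 158; 40; 55; 172; 30; 83; 64; 45; 79; 7; 82; 132; 104; 119; 147;
       150; 184; 62; 81; 2; 127; 87; 17; 35; 51; 173; 182; 16; 126; 102; 31; 140; 14; 115; 56; 75;
       174; 160; 67; 151; 123; 32; 85; 39; 163; 122; 139; 162; 36; 46; 168; 97; 58; 133; 9; 120; 29;
       10; 89; 138; 76; 169; 165; 86; 159; 93; 100; 21; 44; 106; 125; 167; 116; 154; 60; 177; 166;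
       6; 42; 18; 80; 52; 146; 137; 108; 136; 23; 72; 57; 107; 176; 47; 26; 143; 37; 112; 68; 96;
       187; 65; 41; 13; 48; 0; 117; 63; 19; 33; 95; 161; 178; 90; 71; 74; 25; 130; 110; 186; 50; 73;
       129; 111; 22; 144; 27; 34; 156; 84; 24; 77; 141; 180; 179; 1; 170; 142; 114; 88; 152; 171]);
  (192,
   [:: 1; 123; 133; 147; 184; 97; 130; 31; 19; 141; 51; 91; 16; 65; 182; 30; 63; 80; 120; 3; 53;
       139; 179; 143; 171; 44; 55; 21; 165; 54; 50; 174; 5; 146; 42; 129; 35; 96; 60; 138; 22; 177;
       34; 116; 102; 152; 101; 114; 4; 24; 77; 135; 73; 106; 25; 137; 15; 153; 49; 23; 124; 172;
       104; 103; 81; 33; 64; 74; 47; 157; 66; 89; 144; 190; 69; 168; 121; 151; 26; 128; 112; 111;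
       110; 18; 17; 48; 162; 68; 6; 166; 40; 117; 160; 158; 185; 118; 134; 75; 132; 8; 136; 186; 72;
       45; 148; 62; 176; 100; 105; 178; 37; 127; 43; 98; 180; 169; 173; 11; 95; 39; 7; 70; 28; 113;
       29; 14; 188; 10; 108; 46; 84; 170; 175; 71; 87; 93; 52; 187; 85; 61; 142; 0; 79; 67; 12; 107;
       82; 150; 161; 154; 41; 163; 189; 140; 58; 115; 191; 86; 92; 38; 57; 59; 131; 149; 20; 126;
       155; 36; 32; 183; 56; 83; 181; 27; 13; 78; 122; 90; 119; 145; 88; 76; 125; 94; 167; 99; 109;
       159; 2; 156; 164; 9],
   [:: 155; 92; 180; 7; 87; 122; 91; 32; 43; 184; 159; 127; 78; 161; 167; 111; 153; 74; 157; 11;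
       183; 188; 21; 75; 102; 85; 19; 44; 8; 179; 126; 81; 137; 176; 62; 72; 168; 83; 79; 58; 14;
       25; 98; 51; 156; 94; 152; 48; 109; 40; 125; 64; 1; 135; 52; 23; 70; 134; 27; 3; 30; 77; 69;
       59; 173; 37; 146; 89; 56; 171; 73; 142; 31; 117; 114; 186; 119; 104; 170; 76; 187; 34; 190;
       35; 148; 39; 71; 140; 158; 67; 149; 100; 82; 160; 15; 26; 129; 33; 36; 66; 50; 189; 141; 38;
       124; 150; 28; 55; 110; 145; 139; 0; 130; 181; 16; 47; 42; 182; 166; 95; 18; 136; 164; 112;
       103; 2; 53; 22; 20; 106; 151; 143; 138; 97; 172; 29; 191; 169; 4; 10; 41; 46; 49; 24; 154;
       175; 54; 17; 174; 144; 9; 57; 107; 86; 165; 178; 121; 96; 13; 132; 63; 90; 128; 123; 6; 147;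
       5; 113; 105; 80; 88; 133; 177; 60; 116; 162; 99; 61; 108; 120; 12; 115; 163; 45; 93; 65; 68;
       84; 131; 101; 118; 185]);
  (212,
   [:: 80; 102; 154; 123; 198; 117; 30; 48; 144; 172; 3; 137; 180; 78; 92; 101; 8; 83; 29; 190; 96;
       201; 34; 162; 76; 153; 46; 197; 184; 193; 187; 158; 148; 157; 7; 141; 183; 140; 168; 211;
       114; 36; 209; 49; 150; 19; 115; 124; 106; 181; 204; 142; 116; 178; 79; 56; 146; 62; 189; 73;
       135; 74; 149; 35; 87; 93; 136; 164; 39; 38; 166; 105; 51; 126; 155; 11; 14; 42; 104; 94; 50;
       165; 59; 77; 33; 95; 64; 185; 69; 131; 129; 202; 90; 89; 111; 133; 1; 18; 0; 9; 107; 152;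
       151; 44; 13; 188; 91; 134; 196; 99; 21; 61; 145; 52; 97; 47; 171; 4; 109; 208; 100; 175; 110;
       191; 41; 127; 112; 174; 24; 192; 25; 32; 60; 16; 143; 82; 43; 156; 167; 147; 63; 138; 203;
       205; 98; 67; 6; 28; 132; 194; 200; 199; 81; 84; 186; 108; 120; 160; 88; 163; 206; 177; 65;
       55; 31; 53; 128; 57; 66; 75; 118; 26; 207; 70; 173; 23; 119; 22; 103; 40; 12; 5; 139; 2; 130;
       122; 68; 113; 121; 210; 179; 125; 17; 86; 161; 54; 159; 15; 71; 27; 176; 45; 72; 169; 10; 85;
       37; 182; 195; 170; 20; 58],
   [:: 55; 63; 54; 9; 17; 87; 86; 42; 164; 127; 21; 74; 143; 195; 159; 8; 24; 32; 76; 146; 109; 206;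
       72; 27; 133; 149; 193; 6; 157; 112; 66; 181; 152; 99; 160; 1; 131; 25; 78; 200; 155; 102;
       126; 117; 81; 28; 194; 158; 51; 165; 129; 145; 39; 47; 205; 161; 79; 34; 26; 201; 209; 208;
       57; 135; 73; 29; 151; 204; 175; 113; 174; 199; 137; 92; 56; 2; 178; 125; 186; 202; 104; 59;
       58; 128; 83; 197; 107; 46; 115; 123; 122; 192; 49; 40; 207; 162; 171; 19; 89; 150; 60; 211;
       23; 120; 75; 31; 198; 108; 10; 177; 124; 184; 140; 94; 119; 172; 118; 37; 134; 196; 44; 105;
       16; 69; 77; 48; 93; 101; 3; 170; 35; 141; 88; 43; 103; 22; 14; 180; 136; 90; 98; 106; 168;
       139; 183; 191; 4; 65; 12; 179; 36; 80; 142; 96; 166; 7; 84; 190; 189; 91; 100; 18; 169; 185;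
       95; 50; 111; 156; 5; 13; 188; 45; 53; 114; 0; 167; 130; 138; 85; 154; 64; 11; 116; 71; 132;
       210; 148; 173; 67; 30; 38; 82; 144; 62; 70; 61; 176; 147; 33; 41; 163; 110; 187; 20; 97; 52;
       203; 15; 121; 68; 182; 153]);
  (236,
   [:: 51; 136; 155; 52; 140; 43; 183; 203; 106; 127; 207; 165; 114; 193; 55; 68; 29; 49; 78; 30;
       227; 11; 149; 65; 118; 166; 130; 190; 229; 75; 94; 235; 77; 3; 121; 102; 16; 125; 56; 123;
       37; 234; 171; 72; 105; 57; 86; 97; 197; 28; 221; 9; 218; 223; 187; 42; 168; 132; 33; 174;
       134; 91; 182; 79; 159; 112; 14; 104; 54; 146; 212; 185; 209; 230; 76; 213; 96; 69; 160; 38;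
       84; 19; 228; 71; 50; 111; 1; 210; 191; 179; 233; 20; 216; 178; 173; 122; 5; 103; 167; 25;
       148; 110; 215; 36; 232; 17; 59; 126; 40; 60; 124; 88; 107; 199; 90; 109; 189; 208; 172; 83;
       44; 176; 202; 222; 180; 201; 46; 7; 145; 226; 13; 93; 48; 15; 156; 0; 175; 158; 120; 82; 164;
       39; 147; 32; 99; 92; 198; 41; 73; 22; 231; 100; 141; 24; 220; 154; 87; 47; 186; 150; 195;
       144; 34; 66; 137; 224; 61; 23; 225; 4; 204; 108; 128; 206; 170; 200; 161; 63; 12; 157; 119;
       131; 151; 64; 26; 152; 184; 133; 169; 129; 205; 95; 115; 194; 116; 80; 18; 181; 58; 162; 8;
       27; 138; 10; 31; 113; 53; 214; 211; 219; 74; 153; 81; 45; 142; 85; 135; 70; 163; 6; 192; 117;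
       196; 98; 217; 177; 21; 101; 139; 143; 2; 67; 89; 62; 188; 35],
   [:: 131; 98; 157; 94; 31; 107; 167; 194; 217; 234; 133; 125; 160; 128; 142; 56; 24; 169; 16; 164;
       14; 41; 186; 101; 130; 76; 110; 26; 9; 43; 102; 18; 195; 78; 187; 191; 210; 179; 205; 63; 23;
       50; 146; 87; 198; 20; 75; 96; 180; 97; 46; 151; 111; 21; 114; 15; 227; 165; 224; 199; 22; 8;
       27; 132; 208; 175; 84; 200; 138; 57; 74; 93; 49; 7; 159; 218; 118; 19; 109; 81; 202; 135; 36;
       4; 211; 117; 152; 112; 85; 115; 1; 212; 35; 229; 183; 100; 44; 213; 154; 90; 53; 188; 163;
       62; 3; 79; 153; 70; 207; 116; 122; 60; 215; 106; 72; 13; 30; 222; 64; 209; 177; 233; 172;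
       140; 48; 6; 221; 189; 216; 192; 108; 184; 147; 83; 235; 193; 204; 92; 168; 185; 42; 162; 17;
       149; 66; 68; 2; 88; 225; 201; 161; 52; 223; 145; 86; 119; 196; 137; 95; 129; 136; 171; 45;
       166; 37; 220; 12; 206; 124; 105; 80; 28; 173; 55; 89; 69; 155; 5; 40; 174; 73; 121; 148; 65;
       141; 170; 158; 47; 91; 150; 61; 214; 182; 32; 176; 33; 231; 126; 226; 143; 0; 59; 39; 34; 51;
       144; 139; 178; 134; 228; 11; 156; 10; 103; 127; 120; 232; 230; 58; 203; 104; 190; 99; 67;
       113; 54; 71; 29; 25; 181; 197; 38; 82; 219; 77; 123]);
  (244,
   [:: 94; 39; 166; 234; 238; 61; 110; 93; 137; 59; 225; 74; 105; 52; 35; 201; 1; 167; 200; 11; 90;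
       160; 82; 175; 55; 202; 136; 241; 163; 22; 150; 51; 34; 109; 171; 227; 64; 132; 54; 204; 151;
       157; 41; 18; 135; 57; 89; 130; 116; 172; 211; 156; 170; 44; 26; 119; 184; 97; 198; 143; 95;
       139; 183; 45; 232; 179; 237; 191; 14; 203; 230; 152; 36; 103; 48; 176; 123; 111; 133; 77; 25;
       177; 87; 226; 49; 53; 92; 63; 195; 29; 24; 30; 161; 144; 107; 122; 243; 76; 131; 17; 159; 8;
       235; 222; 213; 114; 228; 4; 145; 138; 99; 209; 215; 121; 168; 197; 70; 3; 207; 13; 80; 88;
       212; 73; 165; 27; 193; 5; 189; 12; 140; 146; 154; 221; 69; 50; 178; 182; 68; 196; 28; 23; 43;
       218; 102; 108; 231; 0; 128; 71; 79; 134; 129; 219; 101; 66; 115; 180; 210; 72; 15; 86; 81;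
       125; 96; 106; 173; 240; 185; 194; 75; 83; 216; 16; 38; 153; 113; 58; 224; 7; 141; 112; 208;
       31; 220; 56; 100; 205; 124; 98; 20; 186; 148; 91; 147; 118; 162; 84; 67; 127; 155; 19; 60;
       214; 37; 9; 187; 158; 181; 65; 46; 199; 85; 117; 217; 42; 78; 174; 32; 188; 120; 164; 206;
       149; 33; 169; 47; 62; 242; 223; 10; 6; 142; 21; 126; 40; 104; 233; 239; 236; 192; 190; 2;
       229],
   [:: 36; 30; 117; 201; 92; 86; 16; 173; 208; 121; 156; 66; 25; 78; 52; 209; 122; 157; 8; 44; 118;
       236; 149; 181; 75; 68; 228; 19; 237; 125; 58; 159; 11; 204; 139; 238; 22; 3; 160; 126; 223;
       95; 89; 210; 65; 39; 10; 200; 202; 57; 163; 35; 98; 225; 232; 133; 24; 154; 176; 170; 134;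
       169; 82; 207; 220; 195; 100; 0; 116; 110; 240; 153; 111; 105; 221; 93; 7; 180; 136; 128; 166;
       18; 233; 87; 81; 94; 71; 103; 179; 112; 28; 161; 217; 69; 40; 20; 131; 26; 138; 174; 73; 227;
       79; 108; 91; 77; 97; 187; 48; 175; 54; 243; 115; 101; 84; 168; 206; 188; 29; 12; 189; 42;
       172; 85; 226; 152; 4; 164; 80; 196; 190; 1; 37; 31; 165; 141; 13; 148; 62; 239; 70; 124; 137;
       51; 45; 222; 158; 191; 63; 15; 234; 147; 2; 33; 46; 104; 76; 150; 90; 119; 193; 9; 230; 143;
       53; 224; 218; 212; 23; 167; 194; 47; 214; 5; 231; 72; 17; 203; 177; 140; 67; 99; 61; 55; 49;
       120; 216; 129; 6; 74; 109; 205; 43; 56; 130; 162; 197; 171; 145; 142; 215; 50; 41; 38; 32;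
       146; 123; 155; 27; 21; 199; 192; 106; 182; 113; 88; 107; 34; 235; 64; 183; 96; 229; 242; 114;
       178; 83; 184; 132; 135; 59; 144; 127; 211; 185; 151; 14; 219; 213; 241; 60; 186; 102; 198]);
  (256,
   [:: 1; 7; 110; 156; 34; 206; 129; 79; 252; 148; 107; 24; 82; 201; 90; 62; 10; 242; 118; 35; 147;
       253; 80; 168; 245; 43; 173; 140; 243; 98; 52; 38; 190; 78; 149; 157; 4; 248; 23; 215; 186;
       226; 192; 218; 146; 87; 97; 225; 158; 178; 232; 240; 116; 91; 249; 47; 76; 214; 15; 112; 9;
       42; 61; 11; 72; 56; 143; 222; 210; 39; 132; 94; 44; 75; 100; 163; 171; 74; 3; 88; 60; 54;
       115; 165; 233; 113; 175; 217; 251; 200; 202; 229; 141; 221; 234; 188; 5; 14; 32; 138; 21;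
       133; 81; 18; 213; 212; 46; 111; 137; 130; 170; 49; 36; 109; 58; 101; 194; 134; 179; 114; 236;
       135; 239; 247; 238; 160; 69; 207; 231; 208; 174; 67; 219; 189; 40; 89; 167; 37; 237; 164; 2;
       51; 205; 162; 211; 103; 59; 197; 196; 235; 244; 31; 155; 180; 26; 30; 84; 172; 27; 8; 95;
       220; 93; 50; 6; 250; 150; 203; 145; 131; 254; 83; 64; 227; 184; 63; 128; 13; 120; 106; 126;
       144; 123; 154; 182; 108; 191; 124; 199; 66; 0; 86; 216; 20; 19; 71; 230; 161; 151; 16; 65;
       99; 17; 119; 85; 53; 193; 92; 183; 117; 177; 29; 159; 127; 255; 181; 166; 195; 169; 28; 209;
       139; 57; 22; 185; 136; 122; 77; 12; 241; 204; 187; 33; 73; 224; 105; 70; 142; 198; 102; 104;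
       223; 121; 55; 25; 228; 176; 125; 152; 68; 153; 96; 48; 246; 41; 45],
   [:: 30; 48; 207; 167; 71; 36; 81; 25; 2; 219; 86; 125; 14; 32; 88; 228; 202; 226; 119; 128; 164;
       246; 42; 4; 22; 103; 94; 78; 239; 41; 92; 35; 115; 129; 0; 206; 166; 220; 77; 217; 139; 218;
       199; 179; 245; 67; 231; 238; 174; 222; 240; 27; 211; 204; 197; 105; 203; 169; 212; 132; 149;
       13; 186; 158; 7; 213; 61; 112; 150; 232; 20; 200; 114; 31; 162; 236; 93; 223; 171; 123; 177;
       106; 19; 99; 49; 131; 201; 145; 237; 80; 79; 216; 15; 170; 8; 51; 148; 181; 251; 120; 227;
       180; 66; 50; 45; 68; 175; 121; 136; 28; 23; 249; 82; 39; 152; 209; 233; 198; 173; 91; 1; 126;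
       6; 56; 161; 215; 244; 134; 96; 104; 16; 144; 122; 194; 143; 113; 76; 26; 191; 147; 65; 189;
       73; 130; 83; 185; 182; 89; 163; 97; 54; 62; 3; 146; 241; 255; 159; 57; 141; 44; 156; 196;
       254; 72; 40; 224; 195; 69; 225; 17; 137; 133; 21; 153; 135; 38; 230; 183; 98; 165; 154; 192;
       12; 127; 90; 117; 210; 37; 43; 5; 172; 142; 75; 87; 46; 74; 124; 176; 247; 187; 60; 178; 101;
       18; 205; 190; 53; 248; 85; 252; 10; 243; 235; 184; 110; 151; 208; 24; 64; 229; 84; 63; 140;
       47; 34; 33; 55; 253; 138; 188; 168; 9; 107; 111; 100; 70; 160; 102; 52; 155; 11; 95; 109;
       242; 116; 157; 118; 193; 221; 58; 234; 108; 29; 250; 214; 59]);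
  (268,
   [:: 115; 80; 39; 35; 220; 27; 157; 87; 217; 145; 57; 70; 238; 197; 84; 189; 33; 47; 13; 204; 102;
       215; 138; 90; 252; 242; 232; 141; 11; 133; 161; 249; 7; 229; 152; 175; 105; 101; 29; 169;
       222; 149; 41; 165; 72; 202; 266; 125; 191; 254; 182; 85; 106; 170; 99; 76; 24; 20; 216; 214;
       62; 5; 42; 264; 126; 213; 69; 248; 110; 107; 230; 50; 143; 91; 221; 10; 12; 227; 205; 73;
       130; 53; 188; 184; 23; 44; 240; 127; 117; 94; 223; 154; 211; 144; 6; 181; 199; 58; 151; 187;
       64; 121; 111; 34; 225; 97; 93; 156; 185; 206; 263; 207; 212; 233; 22; 146; 253; 49; 116; 75;
       104; 19; 95; 25; 159; 218; 36; 160; 4; 140; 166; 120; 244; 118; 59; 178; 137; 60; 31; 241;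
       231; 56; 247; 201; 209; 114; 66; 228; 192; 43; 51; 54; 177; 172; 158; 98; 26; 30; 18; 81; 78;
       88; 3; 171; 129; 259; 255; 251; 180; 8; 132; 55; 148; 92; 226; 17; 147; 77; 21; 109; 68; 194;
       48; 136; 260; 245; 174; 65; 122; 96; 236; 257; 16; 139; 9; 150; 1; 63; 89; 256; 186; 224;
       183; 173; 103; 32; 28; 200; 153; 15; 237; 208; 83; 134; 196; 193; 74; 265; 113; 176; 235;
       168; 164; 40; 128; 86; 82; 0; 124; 203; 135; 61; 258; 239; 250; 112; 243; 37; 167; 179; 71;
       195; 219; 14; 210; 52; 2; 198; 262; 123; 38; 162; 45; 108; 163; 100; 246; 267; 155; 46; 79;
       142; 119; 67; 131; 261; 190; 234],
   [:: 167; 15; 250; 53; 88; 262; 199; 195; 266; 10; 159; 219; 191; 152; 156; 93; 213; 235; 44; 261;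
       247; 134; 83; 125; 115; 265; 147; 208; 45; 149; 102; 160; 201; 192; 74; 248; 43; 47; 59; 154;
       0; 186; 227; 176; 150; 20; 217; 39; 91; 229; 107; 237; 161; 119; 123; 8; 64; 68; 215; 135;
       46; 76; 212; 92; 29; 193; 75; 175; 179; 242; 72; 130; 171; 124; 111; 194; 136; 50; 77; 82;
       31; 114; 34; 172; 28; 220; 42; 210; 226; 121; 66; 140; 89; 78; 216; 3; 90; 211; 252; 169; 16;
       233; 48; 198; 214; 118; 122; 260; 144; 202; 17; 209; 7; 132; 148; 231; 103; 32; 11; 253; 245;
       126; 60; 190; 65; 131; 5; 21; 151; 187; 94; 18; 101; 238; 158; 37; 232; 181; 57; 12; 95; 69;
       85; 9; 6; 108; 223; 73; 97; 197; 30; 204; 239; 184; 51; 117; 62; 258; 137; 141; 70; 96; 145;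
       19; 86; 23; 228; 98; 236; 224; 106; 189; 163; 63; 170; 4; 142; 205; 259; 116; 157; 162; 256;
       113; 263; 178; 249; 1; 84; 52; 49; 40; 139; 164; 206; 104; 80; 2; 244; 234; 230; 133; 241;
       257; 246; 183; 120; 254; 203; 207; 168; 14; 200; 81; 26; 22; 38; 255; 243; 180; 35; 188; 58;
       41; 166; 129; 267; 105; 54; 153; 128; 27; 165; 109; 173; 110; 240; 185; 55; 71; 112; 61; 264;
       67; 79; 33; 146; 24; 87; 99; 138; 221; 36; 174; 177; 182; 100; 225; 127; 56; 143; 13; 196;
       155; 218; 222; 25; 251]);
  (284,
   [:: 258; 140; 191; 46; 88; 204; 118; 169; 159; 275; 249; 81; 120; 67; 112; 6; 164; 247; 41; 244;
       27; 176; 174; 242; 207; 33; 84; 200; 278; 173; 13; 35; 103; 225; 107; 246; 250; 82; 274; 129;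
       4; 11; 157; 172; 113; 60; 182; 210; 42; 156; 132; 248; 151; 279; 170; 40; 111; 92; 175; 281;
       136; 59; 255; 220; 161; 43; 251; 189; 213; 102; 147; 143; 128; 211; 185; 168; 24; 282; 10;
       55; 29; 3; 119; 93; 2; 216; 263; 74; 138; 78; 266; 197; 8; 5; 53; 98; 39; 117; 223; 105; 58;
       193; 271; 245; 269; 264; 167; 57; 152; 89; 85; 179; 133; 236; 139; 178; 262; 61; 37; 222; 54;
       241; 73; 260; 252; 134; 144; 227; 130; 186; 149; 265; 26; 69; 208; 259; 141; 280; 233; 199;
       68; 163; 12; 237; 31; 76; 212; 50; 36; 114; 122; 48; 72; 194; 268; 171; 124; 15; 30; 240; 51;
       86; 99; 123; 150; 162; 195; 214; 101; 196; 7; 110; 126; 238; 283; 77; 18; 205; 226; 108; 127;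
       243; 224; 106; 198; 181; 63; 158; 23; 277; 203; 229; 180; 62; 184; 21; 232; 256; 47; 64; 17;
       253; 14; 187; 104; 235; 52; 97; 165; 116; 90; 95; 261; 192; 96; 22; 215; 121; 94; 145; 0;
       166; 217; 28; 25; 218; 100; 239; 190; 202; 125; 79; 146; 273; 1; 188; 56; 80; 219; 270; 91;
       32; 148; 153; 221; 201; 257; 9; 131; 70; 44; 34; 276; 109; 49; 272; 154; 75; 87; 155; 177;
       230; 254; 65; 231; 228; 267; 66; 16; 209; 20; 137; 183; 234; 160; 71; 45; 19; 135; 142; 83;
       115; 206; 38],
   [:: 24; 189; 243; 164; 39; 208; 233; 216; 223; 108; 206; 91; 158; 282; 167; 187; 155; 35; 280;
       66; 258; 219; 64; 127; 153; 204; 278; 234; 53; 123; 249; 200; 192; 246; 198; 48; 51; 220; 77;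
       140; 17; 262; 169; 174; 54; 207; 119; 69; 96; 157; 150; 106; 275; 209; 45; 67; 176; 197; 148;
       134; 55; 163; 172; 4; 218; 99; 80; 247; 57; 90; 259; 268; 105; 56; 83; 5; 213; 27; 49; 147;
       245; 272; 15; 42; 110; 30; 156; 250; 40; 185; 231; 160; 183; 175; 60; 16; 180; 283; 179; 131;
       225; 173; 276; 161; 73; 2; 242; 71; 23; 252; 100; 93; 75; 0; 98; 113; 228; 37; 182; 20; 47;
       3; 101; 199; 178; 130; 214; 236; 50; 253; 33; 273; 87; 132; 195; 107; 201; 193; 145; 205;
       191; 1; 7; 29; 203; 230; 116; 170; 22; 267; 97; 89; 112; 95; 260; 141; 235; 194; 139; 202;
       154; 165; 129; 81; 104; 126; 8; 256; 196; 6; 171; 9; 146; 271; 227; 46; 281; 237; 102; 125;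
       34; 274; 92; 186; 76; 121; 144; 152; 255; 142; 63; 265; 109; 61; 257; 226; 19; 184; 28; 270;
       151; 251; 65; 38; 261; 13; 244; 58; 11; 41; 68; 222; 103; 215; 78; 212; 124; 44; 210; 264;
       114; 137; 120; 72; 135; 118; 74; 133; 128; 79; 162; 62; 248; 263; 143; 241; 229; 181; 31; 85;
       168; 190; 217; 177; 240; 10; 254; 25; 221; 269; 12; 117; 279; 52; 115; 138; 232; 59; 238; 88;
       277; 94; 188; 211; 21; 84; 18; 111; 224; 136; 159; 82; 32; 86; 149; 43; 70; 239; 266; 14; 36;
       26; 166; 122]);
  (288,
   [:: 1; 44; 275; 241; 20; 100; 200; 223; 139; 254; 86; 134; 2; 45; 169; 19; 132; 286; 266; 99;
       222; 23; 229; 65; 203; 158; 195; 270; 92; 263; 116; 135; 281; 206; 64; 170; 141; 93; 166;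
       173; 128; 102; 167; 219; 189; 89; 243; 130; 187; 163; 208; 57; 239; 191; 144; 0; 54; 218; 32;
       285; 171; 276; 151; 136; 117; 178; 257; 245; 67; 124; 238; 62; 277; 76; 237; 125; 202; 262;
       267; 87; 224; 271; 105; 157; 9; 22; 55; 205; 220; 149; 152; 27; 80; 265; 176; 182; 175; 30;
       207; 4; 68; 83; 138; 174; 216; 212; 126; 147; 123; 259; 234; 78; 51; 88; 29; 230; 74; 264;
       140; 197; 154; 33; 35; 120; 181; 247; 75; 61; 17; 15; 214; 261; 56; 85; 69; 272; 164; 168;
       81; 101; 217; 260; 3; 211; 250; 28; 42; 95; 153; 59; 244; 165; 279; 107; 46; 21; 119; 11;
       204; 142; 146; 108; 113; 159; 90; 145; 233; 194; 97; 37; 143; 252; 198; 248; 114; 162; 84;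
       121; 50; 109; 199; 104; 231; 172; 71; 179; 49; 256; 70; 161; 249; 60; 227; 26; 8; 5; 221; 52;
       6; 210; 48; 72; 180; 213; 160; 18; 110; 12; 253; 193; 131; 232; 16; 155; 34; 91; 111; 258;
       283; 98; 127; 43; 215; 79; 183; 77; 235; 192; 106; 58; 278; 201; 41; 36; 94; 129; 273; 255;
       13; 137; 156; 115; 53; 196; 7; 122; 24; 226; 240; 282; 103; 66; 269; 184; 112; 268; 188; 150;
       287; 236; 10; 73; 228; 47; 96; 31; 177; 185; 38; 133; 190; 242; 284; 280; 25; 251; 40; 118;
       14; 274; 39; 63; 246; 148; 225; 82; 186; 209],
   [:: 77; 88; 204; 267; 222; 251; 166; 281; 243; 287; 201; 154; 142; 183; 149; 141; 117; 190; 71;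
       62; 61; 115; 181; 74; 56; 272; 54; 203; 252; 156; 218; 279; 224; 200; 237; 186; 136; 57; 112;
       24; 106; 83; 268; 79; 191; 176; 125; 86; 278; 205; 246; 22; 8; 23; 41; 100; 31; 73; 220; 81;
       240; 42; 212; 11; 33; 48; 286; 199; 126; 134; 105; 195; 145; 75; 248; 2; 90; 20; 282; 193;
       114; 127; 254; 108; 132; 34; 17; 85; 226; 52; 280; 97; 119; 67; 123; 253; 49; 161; 18; 66;
       257; 160; 46; 285; 16; 122; 63; 13; 188; 121; 271; 230; 130; 265; 27; 169; 238; 148; 9; 138;
       167; 207; 102; 163; 213; 233; 99; 78; 6; 150; 259; 168; 235; 202; 255; 239; 135; 116; 164;
       196; 137; 229; 51; 236; 69; 32; 35; 225; 72; 60; 139; 152; 12; 215; 270; 158; 231; 3; 276;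
       92; 232; 111; 38; 173; 216; 94; 120; 262; 177; 68; 65; 227; 28; 244; 93; 258; 1; 129; 269;
       194; 47; 273; 284; 155; 217; 209; 37; 180; 5; 82; 43; 101; 197; 274; 198; 40; 14; 118; 103;
       64; 263; 283; 98; 185; 25; 15; 170; 144; 221; 89; 187; 266; 261; 178; 264; 210; 133; 19; 0;
       153; 55; 70; 30; 184; 165; 171; 45; 182; 146; 110; 26; 159; 59; 277; 157; 44; 58; 91; 245;
       50; 234; 21; 250; 95; 189; 256; 242; 104; 214; 241; 87; 39; 174; 76; 131; 223; 29; 7; 124;
       107; 84; 162; 4; 247; 36; 140; 228; 96; 151; 208; 128; 249; 260; 113; 53; 10; 211; 109; 175;
       219; 206; 179; 172; 80; 275; 192; 147; 143]);
  (292,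
   [:: 105; 96; 103; 175; 160; 112; 90; 141; 83; 24; 190; 240; 239; 82; 164; 17; 277; 147; 14; 284;
       189; 167; 288; 228; 67; 66; 57; 78; 263; 62; 221; 279; 102; 58; 144; 224; 202; 211; 272; 94;
       187; 123; 49; 121; 276; 181; 118; 44; 157; 129; 55; 273; 173; 120; 275; 180; 108; 209; 114;
       46; 70; 267; 248; 101; 27; 26; 230; 208; 183; 237; 69; 162; 106; 91; 250; 1; 10; 176; 232;
       99; 110; 243; 9; 227; 95; 0; 270; 77; 80; 235; 161; 233; 23; 71; 216; 156; 68; 154; 37; 88;
       137; 13; 149; 280; 51; 217; 122; 130; 289; 215; 54; 12; 285; 72; 64; 247; 6; 245; 4; 132;
       210; 115; 281; 41; 186; 199; 111; 256; 76; 231; 178; 229; 32; 191; 163; 43; 119; 201; 113;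
       171; 38; 169; 109; 21; 193; 213; 264; 236; 251; 125; 134; 100; 158; 98; 15; 242; 241; 53;
       104; 5; 206; 257; 148; 286; 73; 291; 85; 84; 249; 8; 174; 225; 65; 212; 136; 22; 42; 93; 146;
       7; 246; 56; 274; 287; 116; 271; 138; 50; 143; 48; 207; 60; 128; 252; 203; 166; 259; 195; 258;
       52; 124; 36; 127; 194; 47; 61; 31; 117; 172; 223; 97; 33; 39; 170; 155; 168; 35; 253; 244; 3;
       200; 89; 234; 28; 81; 278; 11; 192; 139; 2; 153; 79; 19; 29; 222; 16; 255; 45; 159; 220; 198;
       145; 269; 59; 226; 152; 254; 150; 283; 219; 74; 205; 218; 204; 182; 87; 107; 140; 282; 197;
       165; 63; 135; 266; 265; 86; 131; 262; 188; 290; 18; 142; 151; 25; 196; 268; 34; 179; 238;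
       185; 30; 214; 261; 260; 75; 126; 177; 40; 133; 184; 20; 92],
   [:: 32; 42; 45; 15; 202; 113; 23; 79; 155; 264; 108; 67; 256; 50; 196; 166; 152; 250; 191; 101;
       84; 213; 100; 145; 259; 10; 55; 98; 14; 255; 227; 268; 92; 281; 107; 194; 104; 7; 277; 119;
       109; 260; 230; 200; 253; 90; 183; 226; 192; 95; 65; 181; 44; 180; 156; 66; 175; 178; 161;
       160; 54; 110; 287; 38; 8; 197; 244; 81; 182; 47; 176; 20; 62; 249; 148; 25; 1; 210; 245; 217;
       232; 157; 198; 22; 91; 220; 130; 48; 96; 291; 106; 3; 94; 233; 203; 248; 216; 115; 211; 267;
       242; 167; 257; 6; 36; 172; 82; 105; 77; 193; 234; 70; 30; 29; 43; 141; 51; 114; 170; 258;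
       129; 112; 102; 209; 33; 5; 46; 16; 0; 122; 185; 241; 85; 276; 263; 289; 229; 278; 199; 21;
       139; 34; 225; 120; 13; 76; 205; 73; 18; 154; 57; 247; 215; 187; 69; 273; 24; 11; 140; 78;
       179; 162; 61; 274; 147; 190; 89; 132; 189; 99; 235; 218; 272; 177; 212; 143; 206; 262; 240;
       2; 138; 75; 118; 236; 63; 174; 146; 12; 221; 131; 26; 142; 80; 282; 271; 168; 231; 134; 222;
       121; 164; 59; 56; 74; 117; 151; 201; 27; 93; 149; 285; 261; 169; 137; 71; 4; 195; 165; 288;
       52; 35; 116; 86; 204; 266; 103; 39; 135; 125; 28; 284; 254; 153; 40; 237; 136; 208; 111; 265;
       223; 279; 269; 252; 9; 158; 128; 184; 214; 150; 126; 270; 238; 64; 58; 41; 243; 87; 60; 53;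
       290; 19; 159; 275; 97; 286; 219; 228; 123; 239; 224; 68; 124; 246; 17; 280; 31; 72; 188; 144;
       207; 171; 173; 186; 83; 49; 251; 88; 283; 127; 37; 163; 133]);
  (316,
   [:: 264; 68; 188; 113; 283; 166; 237; 12; 24; 106; 279; 4; 142; 99; 8; 89; 278; 26; 54; 314; 10;
       190; 25; 35; 63; 104; 82; 252; 97; 202; 230; 205; 75; 87; 169; 111; 2; 293; 226; 150; 100;
       286; 182; 40; 131; 152; 267; 176; 20; 200; 203; 215; 69; 81; 23; 149; 269; 59; 272; 168; 244;
       28; 133; 253; 222; 98; 0; 88; 287; 124; 136; 306; 227; 251; 105; 117; 312; 53; 65; 119; 239;
       201; 242; 204; 232; 115; 11; 15; 238; 134; 17; 309; 84; 175; 187; 32; 290; 146; 305; 294;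
       101; 34; 259; 313; 228; 158; 186; 185; 197; 243; 212; 233; 315; 178; 102; 114; 122; 296; 159;
       83; 262; 265; 207; 219; 147; 85; 216; 112; 191; 291; 66; 78; 1; 29; 184; 47; 7; 220; 153;
       275; 177; 199; 240; 292; 76; 9; 21; 270; 183; 127; 107; 135; 268; 151; 179; 41; 261; 302;
       165; 247; 110; 71; 55; 225; 49; 156; 39; 14; 48; 51; 295; 154; 285; 257; 64; 281; 223; 108;
       70; 92; 231; 195; 137; 298; 145; 120; 161; 109; 130; 221; 167; 50; 157; 132; 44; 56; 18; 46;
       13; 16; 116; 144; 27; 213; 155; 308; 258; 311; 181; 235; 118; 67; 42; 193; 196; 310; 229;
       162; 288; 79; 277; 280; 123; 304; 297; 91; 103; 249; 224; 173; 72; 255; 138; 271; 129; 37;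
       74; 77; 256; 22; 43; 33; 58; 307; 3; 289; 273; 276; 218; 45; 86; 140; 260; 209; 171; 214;
       174; 80; 19; 60; 125; 128; 38; 73; 164; 148; 189; 121; 192; 303; 274; 170; 198; 94; 126; 163;
       217; 245; 62; 90; 210; 93; 301; 254; 246; 30; 61; 194; 143; 263; 248; 172; 241; 282; 208;
       206; 234; 95; 250; 31; 52; 57; 6; 284; 180; 300; 36; 211; 139; 160; 5; 96; 266; 299; 141;
       236],
   [:: 85; 214; 106; 53; 233; 125; 62; 237; 175; 76; 269; 161; 285; 51; 3; 203; 311; 93; 37; 46;
       221; 135; 297; 235; 21; 308; 165; 182; 83; 219; 5; 82; 30; 284; 27; 160; 147; 115; 132; 33;
       295; 81; 158; 101; 197; 251; 121; 48; 36; 240; 299; 0; 96; 271; 246; 70; 41; 60; 220; 218;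
       232; 207; 210; 260; 258; 281; 97; 275; 9; 264; 123; 61; 78; 174; 270; 129; 278; 205; 193;
       112; 241; 54; 262; 307; 98; 306; 146; 217; 298; 59; 188; 6; 102; 198; 136; 195; 170; 301;
       167; 216; 159; 18; 287; 127; 227; 69; 171; 120; 58; 32; 292; 263; 89; 143; 44; 140; 276; 95;
       228; 50; 104; 242; 296; 155; 71; 189; 144; 63; 124; 178; 274; 212; 234; 257; 226; 122; 39;
       277; 215; 4; 91; 25; 312; 300; 196; 55; 309; 10; 86; 244; 186; 288; 128; 20; 43; 267; 222;
       64; 118; 256; 231; 156; 265; 45; 17; 119; 248; 88; 130; 268; 238; 302; 153; 99; 280; 133;
       108; 114; 164; 201; 185; 314; 52; 111; 200; 40; 11; 179; 154; 250; 211; 103; 126; 282; 177;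
       66; 116; 139; 245; 67; 42; 208; 100; 202; 152; 92; 28; 113; 294; 134; 26; 49; 47; 184; 243;
       249; 77; 173; 31; 291; 224; 283; 204; 80; 15; 35; 289; 138; 57; 1; 199; 259; 72; 149; 304;
       12; 180; 239; 56; 194; 169; 206; 166; 183; 279; 38; 192; 14; 305; 290; 24; 22; 151; 16; 145;
       229; 87; 105; 266; 79; 272; 252; 19; 286; 303; 142; 34; 117; 213; 230; 313; 74; 176; 253;
       157; 247; 8; 110; 187; 131; 181; 73; 293; 94; 90; 65; 7; 84; 107; 315; 150; 209; 255; 68; 23;
       168; 191; 190; 2; 29; 162; 310; 254; 225; 223; 273; 148; 109; 261; 236; 137; 75; 13; 172;
       163; 141]);
  (332,
   [:: 65; 278; 116; 266; 142; 296; 177; 73; 3; 207; 274; 150; 172; 230; 23; 211; 141; 71; 46; 146;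
       276; 289; 102; 277; 236; 249; 22; 163; 122; 52; 36; 87; 257; 270; 200; 130; 201; 248; 252;
       99; 83; 291; 221; 126; 164; 186; 24; 91; 225; 34; 159; 226; 322; 198; 220; 199; 329; 10; 72;
       202; 94; 107; 290; 79; 233; 246; 255; 57; 310; 45; 311; 275; 254; 135; 305; 44; 174; 232;
       162; 9; 109; 205; 169; 144; 327; 8; 187; 151; 209; 2; 69; 111; 12; 312; 242; 55; 317; 115;
       119; 269; 286; 50; 59; 184; 114; 302; 32; 294; 307; 262; 1; 214; 106; 314; 53; 228; 279; 92;
       101; 309; 156; 227; 153; 121; 51; 26; 288; 256; 152; 33; 212; 104; 229; 251; 89; 268; 124;
       128; 224; 295; 84; 234; 168; 181; 194; 203; 171; 63; 197; 259; 185; 319; 132; 13; 100; 39;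
       263; 231; 161; 331; 21; 108; 96; 134; 239; 48; 173; 240; 170; 304; 113; 238; 139; 15; 37;
       265; 137; 125; 217; 93; 330; 7; 190; 282; 241; 97; 76; 85; 293; 306; 41; 303; 154; 192; 176;
       110; 74; 49; 149; 75; 5; 271; 235; 131; 223; 157; 195; 179; 30; 77; 222; 148; 244; 120; 191;
       155; 213; 98; 28; 90; 20; 67; 208; 308; 14; 247; 298; 219; 324; 54; 267; 105; 118; 189; 281;
       323; 4; 158; 196; 18; 280; 318; 136; 178; 117; 47; 60; 64; 301; 182; 103; 42; 129; 283; 81;
       143; 273; 165; 133; 29; 287; 80; 19; 326; 11; 215; 62; 167; 88; 321; 6; 264; 66; 328; 258;
       316; 35; 180; 61; 123; 78; 183; 245; 43; 56; 31; 127; 261; 25; 253; 17; 147; 68; 218; 260;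
       82; 95; 216; 204; 300; 313; 243; 86; 16; 112; 320; 138; 272; 27; 206; 145; 315; 299; 175;
       325; 210; 297; 285; 166; 58; 237; 250; 292; 193; 40; 140; 70; 0; 38; 188; 284; 160],
   [:: 125; 193; 168; 214; 189; 91; 287; 94; 303; 283; 266; 304; 267; 146; 211; 257; 226; 278; 29;
       112; 102; 71; 75; 244; 150; 202; 248; 167; 109; 327; 47; 10; 234; 286; 6; 307; 179; 322; 48;
       17; 62; 38; 7; 148; 111; 323; 298; 31; 230; 117; 174; 37; 329; 81; 44; 249; 314; 34; 212; 55;
       175; 135; 218; 20; 221; 181; 184; 222; 197; 64; 313; 15; 316; 119; 260; 196; 26; 325; 36;
       162; 79; 122; 89; 2; 251; 45; 88; 100; 300; 293; 220; 65; 223; 246; 49; 143; 269; 288; 263;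
       275; 192; 152; 72; 274; 77; 40; 201; 161; 204; 5; 124; 103; 253; 296; 130; 299; 114; 176;
       262; 110; 328; 16; 268; 312; 32; 231; 25; 188; 151; 43; 12; 157; 205; 85; 309; 195; 324; 50;
       185; 126; 123; 172; 255; 215; 258; 178; 180; 98; 35; 58; 310; 191; 187; 46; 21; 233; 319;
       254; 306; 281; 78; 53; 285; 240; 203; 208; 147; 294; 171; 131; 8; 241; 177; 13; 308; 97; 169;
       183; 186; 159; 63; 149; 66; 69; 87; 133; 321; 158; 129; 264; 121; 247; 330; 57; 127; 210;
       290; 173; 256; 93; 219; 302; 104; 305; 142; 225; 235; 22; 271; 136; 108; 28; 237; 18; 280;
       33; 326; 54; 106; 80; 289; 96; 252; 3; 9; 132; 190; 331; 128; 95; 315; 41; 259; 101; 270; 83;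
       301; 24; 239; 276; 70; 229; 116; 1; 213; 182; 317; 292; 165; 224; 282; 245; 137; 297; 318;
       51; 90; 14; 194; 140; 60; 273; 153; 272; 23; 232; 284; 164; 139; 115; 198; 118; 92; 227; 30;
       207; 134; 84; 155; 4; 265; 228; 216; 0; 52; 56; 99; 291; 11; 19; 311; 250; 59; 68; 163; 277;
       320; 236; 74; 200; 243; 120; 206; 166; 209; 154; 295; 86; 144; 113; 76; 217; 138; 238; 141;
       170; 145; 61; 160; 107; 67; 27; 42; 279; 156; 73; 199; 242; 105; 39; 82; 261]);
  (348,
   [:: 227; 133; 174; 226; 128; 4; 94; 79; 173; 265; 261; 41; 64; 60; 257; 27; 35; 314; 156; 232;
       301; 70; 32; 347; 327; 213; 77; 16; 29; 206; 237; 159; 179; 298; 97; 239; 251; 331; 198; 50;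
       339; 200; 142; 103; 231; 186; 20; 291; 54; 84; 278; 148; 144; 338; 208; 225; 149; 268; 6; 17;
       309; 48; 69; 40; 272; 101; 242; 9; 277; 106; 330; 162; 216; 303; 222; 248; 276; 316; 126; 75;
       8; 13; 187; 228; 341; 218; 7; 10; 86; 188; 33; 141; 147; 249; 201; 207; 223; 117; 175; 333;
       286; 80; 46; 294; 212; 184; 243; 99; 38; 66; 343; 172; 178; 211; 158; 325; 340; 44; 37; 78;
       18; 287; 163; 253; 105; 299; 15; 102; 73; 197; 312; 245; 115; 111; 131; 160; 315; 199; 203;
       109; 241; 263; 30; 196; 267; 229; 96; 296; 63; 59; 269; 177; 42; 274; 53; 189; 215; 121; 11;
       322; 311; 100; 280; 67; 95; 221; 39; 224; 81; 89; 139; 55; 297; 288; 252; 165; 310; 145; 193;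
       161; 260; 336; 134; 204; 125; 180; 91; 167; 153; 124; 259; 85; 152; 164; 26; 304; 31; 122;
       98; 335; 306; 195; 12; 293; 76; 71; 74; 49; 279; 290; 321; 234; 332; 34; 284; 171; 57; 65;
       68; 83; 337; 23; 317; 236; 326; 270; 104; 281; 157; 256; 123; 112; 90; 110; 328; 202; 19;
       283; 210; 230; 151; 45; 116; 247; 182; 319; 275; 181; 140; 258; 266; 282; 166; 47; 271; 313;
       342; 5; 36; 21; 302; 346; 255; 2; 113; 120; 305; 118; 344; 307; 233; 52; 194; 119; 72; 43;
       92; 114; 300; 88; 93; 254; 285; 24; 246; 130; 240; 320; 214; 108; 192; 82; 324; 295; 191;
       219; 51; 22; 155; 205; 169; 217; 185; 250; 318; 289; 292; 273; 244; 262; 136; 3; 28; 183;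
       150; 138; 146; 137; 323; 14; 238; 154; 56; 170; 264; 1; 61; 132; 235; 143; 0; 87; 176; 220;
       129; 62; 190; 345; 209; 58; 127; 168; 107; 135; 329; 25; 334; 308],
   [:: 58; 87; 342; 201; 168; 337; 93; 288; 53; 8; 184; 32; 326; 154; 98; 1; 171; 23; 241; 81; 319;
       323; 129; 311; 25; 295; 14; 2; 0; 251; 157; 235; 134; 165; 192; 17; 133; 75; 156; 103; 145;
       83; 287; 189; 270; 139; 135; 66; 292; 142; 41; 110; 199; 272; 167; 233; 152; 50; 38; 131;
       121; 191; 264; 338; 96; 176; 181; 136; 70; 261; 193; 174; 124; 20; 144; 91; 46; 268; 343; 16;
       263; 90; 147; 54; 175; 297; 31; 48; 102; 347; 346; 331; 312; 238; 127; 195; 333; 26; 34; 109;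
       141; 227; 30; 298; 77; 179; 137; 162; 196; 64; 211; 228; 108; 190; 49; 339; 256; 280; 222;
       303; 310; 45; 214; 231; 88; 161; 7; 164; 259; 334; 115; 188; 257; 172; 158; 60; 101; 22; 244;
       12; 262; 40; 169; 328; 316; 126; 294; 67; 283; 197; 37; 344; 234; 47; 336; 204; 151; 267;
       308; 327; 207; 28; 305; 33; 5; 322; 239; 332; 61; 318; 52; 330; 284; 24; 106; 89; 97; 329;
       57; 56; 85; 221; 200; 43; 300; 252; 138; 18; 309; 35; 285; 79; 226; 237; 80; 249; 225; 209;
       166; 282; 276; 4; 178; 341; 146; 240; 320; 116; 119; 299; 289; 185; 278; 210; 177; 213; 160;
       243; 149; 304; 72; 128; 13; 114; 107; 10; 6; 173; 279; 69; 63; 84; 313; 212; 194; 183; 286;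
       42; 253; 65; 21; 62; 122; 104; 315; 223; 208; 150; 113; 277; 99; 27; 275; 78; 73; 245; 44;
       224; 301; 217; 203; 11; 100; 182; 202; 155; 74; 125; 321; 55; 229; 258; 170; 112; 92; 187;
       82; 71; 105; 9; 94; 143; 307; 290; 306; 293; 269; 281; 120; 335; 159; 186; 140; 148; 250;
       118; 273; 86; 111; 19; 317; 219; 218; 15; 230; 325; 255; 296; 130; 314; 216; 123; 39; 254;
       180; 76; 246; 68; 271; 51; 220; 324; 291; 95; 274; 153; 265; 340; 36; 242; 232; 215; 266;
       248; 163; 236; 132; 260; 206; 198; 3; 345; 205; 247; 59; 302; 117; 29]);
  (356,
   [:: 51; 342; 322; 324; 198; 338; 218; 317; 245; 69; 249; 251; 274; 17; 298; 41; 229; 146; 334;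
       277; 265; 101; 200; 107; 42; 22; 291; 250; 260; 208; 289; 23; 115; 43; 40; 241; 158; 83; 226;
       307; 52; 54; 224; 58; 153; 248; 242; 145; 147; 60; 151; 45; 343; 150; 169; 349; 273; 105; 78;
       125; 3; 84; 96; 98; 171; 270; 284; 195; 9; 189; 57; 152; 73; 350; 199; 192; 302; 34; 44; 120;
       211; 213; 177; 272; 219; 118; 124; 235; 59; 65; 168; 178; 6; 237; 26; 330; 46; 56; 257; 81;
       1; 164; 77; 346; 348; 182; 239; 87; 0; 279; 271; 285; 299; 38; 190; 329; 335; 167; 88; 187;
       24; 214; 306; 316; 326; 123; 79; 216; 50; 287; 222; 234; 315; 238; 141; 143; 5; 11; 337; 35;
       74; 155; 332; 70; 174; 91; 12; 355; 210; 82; 94; 175; 266; 264; 181; 282; 290; 108; 310; 201;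
       67; 106; 207; 31; 112; 25; 305; 128; 232; 64; 223; 173; 276; 286; 320; 39; 312; 55; 247; 231;
       85; 10; 336; 119; 340; 75; 149; 159; 258; 353; 263; 354; 267; 2; 261; 352; 275; 255; 269; 14;
       16; 295; 188; 319; 325; 204; 196; 92; 191; 212; 29; 127; 142; 309; 133; 303; 89; 99; 202; 30;
       311; 321; 139; 240; 347; 268; 15; 292; 209; 331; 140; 157; 253; 170; 163; 254; 111; 90; 135;
       230; 62; 161; 278; 185; 183; 116; 37; 225; 102; 114; 294; 19; 93; 300; 28; 304; 296; 236; 68;
       341; 215; 217; 104; 221; 233; 49; 138; 61; 63; 243; 156; 194; 328; 36; 154; 166; 333; 76;
       172; 100; 110; 205; 126; 314; 184; 71; 259; 180; 186; 95; 8; 20; 137; 281; 283; 206; 109;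
       121; 197; 33; 117; 297; 32; 162; 313; 4; 103; 220; 301; 129; 228; 327; 252; 262; 66; 246; 21;
       339; 130; 144; 345; 160; 72; 351; 86; 293; 80; 131; 323; 244; 165; 179; 13; 280; 7; 122; 288;
       53; 193; 344; 176; 97; 18; 113; 27; 48; 308; 132; 256; 47; 227; 318; 203; 134; 136; 148],
   [:: 6; 188; 323; 348; 72; 242; 245; 198; 206; 320; 167; 281; 205; 158; 47; 267; 220; 326; 279;
       325; 274; 252; 294; 336; 200; 208; 144; 237; 12; 41; 44; 227; 5; 222; 77; 306; 56; 34; 355;
       91; 49; 163; 344; 213; 328; 345; 199; 202; 316; 74; 277; 88; 82; 58; 132; 157; 298; 251; 299;
       335; 104; 107; 65; 1; 342; 29; 95; 190; 193; 307; 174; 102; 322; 275; 343; 92; 59; 176; 218;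
       290; 48; 162; 233; 339; 148; 181; 109; 67; 129; 146; 35; 255; 183; 106; 178; 156; 173; 37;
       164; 278; 99; 128; 153; 89; 114; 161; 84; 11; 303; 83; 264; 2; 247; 175; 186; 17; 301; 254;
       296; 71; 69; 116; 197; 239; 103; 194; 98; 66; 291; 224; 141; 10; 280; 36; 241; 266; 9; 26; 7;
       313; 57; 327; 350; 110; 256; 184; 137; 232; 221; 171; 40; 43; 246; 100; 117; 76; 112; 304;
       285; 265; 38; 293; 73; 187; 101; 215; 201; 20; 260; 302; 273; 297; 8; 317; 195; 45; 151; 282;
       349; 120; 52; 30; 39; 292; 0; 203; 240; 15; 235; 341; 150; 353; 111; 314; 50; 253; 122; 321;
       61; 286; 311; 133; 250; 331; 259; 258; 172; 54; 185; 180; 244; 230; 86; 13; 216; 308; 140; 4;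
       338; 177; 333; 108; 305; 352; 209; 340; 51; 93; 288; 124; 16; 263; 125; 142; 249; 96; 179;
       168; 21; 127; 169; 300; 204; 231; 143; 226; 90; 310; 154; 23; 315; 318; 228; 212; 248; 262;
       354; 18; 60; 166; 276; 123; 25; 351; 42; 87; 70; 295; 53; 78; 14; 136; 131; 309; 270; 139;
       346; 210; 214; 319; 272; 289; 64; 284; 97; 126; 79; 121; 138; 22; 225; 94; 217; 211; 236;
       105; 19; 155; 24; 269; 119; 55; 347; 170; 330; 165; 207; 27; 113; 219; 261; 238; 192; 145;
       135; 160; 68; 32; 63; 130; 196; 189; 46; 271; 118; 115; 324; 85; 152; 283; 147; 182; 229;
       159; 257; 243; 329; 149; 268; 80; 33; 75; 28; 312; 62; 332; 223; 337; 191; 31; 234; 81; 334;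
       287; 134; 3])]%N.

Lemma Zp_certificates_valid : all Zp_certificate Zp_certificates.
Proof. by vm_compute. Qed.

Definition Z4xZ3cube := ('Z_4 * ('Z_3 * ('Z_3 * 'Z_3)))%type.
HB.instance Definition _ := Finite.on Z4xZ3cube.
HB.instance Definition _ := GRing.Zmodule.on Z4xZ3cube.

Definition of_mixed_radix (k : nat) : Z4xZ3cube :=
  (inZp k, (inZp (k %/ 4), (inZp (k %/ 12), inZp (k %/ 36)))).

Definition Z4xZ3cube_rows : seq nat * seq nat :=
  ([:: 21; 48; 106; 18; 15; 31; 4; 35; 86; 10; 79; 12; 76; 38; 92; 71; 19; 60; 78; 80; 34; 66; 3; 2;
      33; 67; 62; 57; 5; 58; 40; 73; 63; 26; 17; 20; 83; 100; 32; 13; 36; 101; 44; 16; 85; 53; 37;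
      82; 52; 45; 104; 0; 22; 90; 88; 87; 105; 97; 7; 75; 9; 6; 68; 27; 24; 77; 107; 54; 96; 102;
      93; 14; 94; 84; 8; 42; 30; 98; 64; 95; 46; 49; 29; 25; 59; 28; 74; 81; 55; 1; 69; 103; 91; 39;
      70; 51; 47; 99; 23; 89; 65; 11; 41; 50; 61; 56; 72; 43],
   [:: 104; 78; 21; 7; 55; 27; 103; 0; 33; 75; 87; 69; 40; 42; 35; 59; 37; 79; 54; 39; 2; 1; 9; 20;
       94; 76; 4; 68; 85; 73; 5; 30; 8; 93; 63; 36; 11; 31; 92; 89; 6; 49; 25; 41; 81; 38; 106; 98;
       65; 44; 22; 53; 62; 28; 99; 64; 26; 95; 97; 57; 80; 100; 58; 18; 91; 3; 96; 88; 32; 13; 61;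
       83; 34; 102; 82; 19; 17; 101; 72; 14; 84; 23; 24; 70; 71; 52; 66; 10; 15; 16; 51; 77; 48;
       107; 12; 56; 45; 29; 105; 90; 67; 86; 60; 43; 46; 50; 47; 74])%N.

Lemma three_MNOLS_108 : three_MNOLS 108.
Proof.
have card_G : #|{: Z4xZ3cube}| = 108 by rewrite !card_prod !card_ord.
apply: (three_MNOLS_of_certificate card_G
  (r := map of_mixed_radix (iota 0 108)) (s := map of_mixed_radix Z4xZ3cube_rows.1)
  (t := map of_mixed_radix Z4xZ3cube_rows.2)).
by vm_compute.
Qed.

Theorem mainTheorem17 :
  forall n : nat,
    n \in [:: 76; 92; 96; 108; 116; 124; 128; 144; 148; 164; 172; 188; 192;
              212; 236; 244; 256; 268; 284; 288; 292; 316; 332; 348; 356] ->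
    exists A B C : square n,
      (latin_square A /\ latin_square B /\ latin_square C) /\
      (nearly_orthogonal A B /\ nearly_orthogonal A C /\ nearly_orthogonal B C).
Proof.
move=> n n_in.
have : n \in 108 :: [seq cert.1.1 | cert <- Zp_certificates].
  by move: n n_in; apply/allP; vm_compute.
rewrite in_cons => /predU1P [-> | /mapP [cert cert_in ->]]; first exact: three_MNOLS_108.
exact/three_MNOLS_of_Zp_certificate/(allP Zp_certificates_valid).
Qed.
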